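(* Let $G$ be an abelian group and $B=\bigoplus_{i\in G}B_i$ a $G$-graded integral domain finitely generated as a $k$-algebra, where $k$ is a field of characteristic zero with $k\subseteq B_0$. Let $f$ be a cylindrical element of $B$ and $d=\deg(f)\in G$. Then there exists a nonzero homogeneous locally nilpotent derivation $D:B^{(d)}\to B^{(d)}$ such that $\ker(D)\not\subseteq B_0$ and, for some $n\ge1$, $f^n\in D(B^{(d)})\cap\ker(D)$.
   Context: $B^{(d)}=\bigoplus_{i\in\langle d\rangle}B_i$. For nonzero homogeneous $f$, $B_{(f)}$ is the degree-$0$ subring of $B_f$. A ring is a polynomial ring in one variable if it is a polynomial ring in one variable over some subring (zero ring counts). For a $G$-graded ring $B$, $f$ is cylindrical if it is nonzero and homogeneous, $\deg(f)$ has infinite order in $G$, and $B_{(f)}$ is a polynomial ring in one variable. A derivation is homogeneous if it shifts degrees by a fixed group element; locally nilpotent if every element is killed by some power of it. *)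

From HB Require Import structures.
From mathcomp Require Import all_boot all_order all_algebra.
From mathcomp Require Import fraction.
Set Implicit Arguments. Unset Strict Implicit. Unset Printing Implicit Defensive.
Import Order.TTheory GRing.Theory Num.Theory.
Local Open Scope ring_scope.

Definition is_grading (G : zmodType) (B : comNzRingType) (Bi : G -> B -> Prop) :=
  [/\ (forall i, Bi i 0),
      (forall i x y, Bi i x -> Bi i y -> Bi i (x - y)),
      (forall i j x y, Bi i x -> Bi j y -> Bi (i + j) (x * y)),
      (forall b, exists (s : seq G) (c : G -> B),
          [/\ uniq s, (forall i, Bi i (c i)) & b = \sum_(i <- s) c i]) &
      (forall (s : seq G) (c : G -> B), uniq s -> (forall i, Bi i (c i)) ->
          \sum_(i <- s) c i = 0 -> forall i, i \in s -> c i = 0)].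

Inductive gen_alg (k : fieldType) (B : comNzRingType) (phi : k -> B) (S : seq B)
  : B -> Prop :=
  | gen_const c : gen_alg phi S (phi c)
  | gen_gen x : x \in S -> gen_alg phi S x
  | gen_add x y : gen_alg phi S x -> gen_alg phi S y -> gen_alg phi S (x + y)
  | gen_mul x y : gen_alg phi S x -> gen_alg phi S y -> gen_alg phi S (x * y).

Definition fin_gen_alg (k : fieldType) (B : comNzRingType) (phi : k -> B) :=
  exists S : seq B, forall b, gen_alg phi S b.

Definition is_poly_ring_one_var (F : comNzRingType) (R : F -> Prop) :=
  exists (A : F -> Prop) (t : F),
    [/\ A 1 /\ (forall x y, A x -> A y -> A (x - y)),
        (forall x y, A x -> A y -> A (x * y)),
        (forall x, A x -> R x) /\ R t,
        (forall x, R x -> exists p : {poly F}, (forall i, A p`_i) /\ x = p.[t]) &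
        (forall p : {poly F}, (forall i, A p`_i) -> p.[t] = 0 -> p = 0)].

(* the degree-0 subring B_(f) of the localization B_f, inside Frac(B):
   elements b / f^n with b homogeneous of degree n * deg f *)
Definition deg0_loc (G : zmodType) (B : idomainType) (Bi : G -> B -> Prop)
  (d : G) (f : B) : {fraction B} -> Prop :=
  fun x => exists (n : nat) (b : B), Bi (d *+ n) b /\
    x = (@FracField.tofrac B b) / (@FracField.tofrac B (f ^+ n)).

Definition homogeneous (G : zmodType) (B : comNzRingType) (Bi : G -> B -> Prop)
  (f : B) := exists i, Bi i f.

Definition cylindrical (G : zmodType) (B : idomainType) (Bi : G -> B -> Prop)
  (f : B) (d : G) :=
  [/\ f != 0, Bi d f,
      (forall n : nat, (0 < n)%N -> d *+ n != 0)
    & is_poly_ring_one_var (deg0_loc Bi d f)].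

Definition Veronese (G : zmodType) (B : comNzRingType) (Bi : G -> B -> Prop)
  (d : G) : B -> Prop :=
  fun b => exists (s : seq int) (c : int -> B),
    (forall m, Bi (d *~ m) (c m)) /\ b = \sum_(m <- s) c m.

(* D : B -> B considered on the subring C (only values on C matter) *)
Definition derivation_on (B : comNzRingType) (C : B -> Prop) (D : B -> B) :=
  [/\ (forall x, C x -> C (D x)),
      (forall x y, C x -> C y -> D (x + y) = D x + D y) &
      (forall x y, C x -> C y -> D (x * y) = x * D y + D x * y)].

Definition locally_nilpotent_on (B : comNzRingType) (C : B -> Prop) (D : B -> B) :=
  forall x, C x -> exists n : nat, iter n D x = 0.

Definition homogeneous_on (G : zmodType) (B : comNzRingType)
  (Bi : G -> B -> Prop) (C : B -> Prop) (D : B -> B) :=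
  exists e : G, forall i x, C x -> Bi i x -> Bi (i + e) (D x).

From Stdlib Require Import ClassicalEpsilon.
From HB Require Import structures.
From mathcomp Require Import all_boot all_order all_algebra.
From mathcomp Require Import fraction ring zify.
Set Implicit Arguments. Unset Strict Implicit. Unset Printing Implicit Defensive.
Import GRing.Theory.

(* Write B_(f) = A[t]. On the localization, d/dt (killing A and f) is locally
   nilpotent, and for s homogeneous of degree m d the element
   f^(m+N) d/dt (s / f^m) lies in B once N is large enough. Since B is generated
   by finitely many homogeneous elements, Dickson's lemma shows that the
   monomials in them of degree in <d> are products of finitely many such
   monomials, so by the Leibniz rule a single N works on all of B^(d). The
   derivation f^N d/dt so obtained is homogeneous of degree N d, kills f, and
   maps the numerator b of t = b / f^n to f^(n+N). *)

Definition dickson_basis (C : seq nat) (M : (nat -> nat) -> Prop)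
    (L : seq (nat -> nat)) :=
  (forall u, List.In u L -> M u) /\
  (forall b, M b -> exists u, List.In u L /\ forall i, i \in C -> (u i <= b i)%N).

Lemma dickson_basis_cover (T : eqType) (C : seq nat) (P : seq T)
    (Mp : T -> (nat -> nat) -> Prop) (M : (nat -> nat) -> Prop) :
  (forall p, p \in P -> exists L, dickson_basis C (Mp p) L) ->
  (forall p b, p \in P -> Mp p b -> M b) ->
  (forall b, M b -> exists2 p, p \in P & Mp p b) ->
  exists L, dickson_basis C M L.
Proof.
elim: P M => [|p P IH] M basisP subM coverM.
  by exists [::]; split => // b /coverM [p].
have [L1 [L1M L1b]] := basisP p (mem_head _ _).
pose M' b := M b /\ exists2 q, q \in P & Mp q b.
have [L2 [L2M L2b]] : exists L, dickson_basis C M' L.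
  apply: IH => [q qP|q b qP Mqb|b []] //.
    by apply: basisP; rewrite inE qP orbT.
  by split; [apply: (subM q); rewrite ?inE ?qP ?orbT | exists q].
exists (L1 ++ L2); split.
  move=> u /(List.in_app_or L1 L2) [uL1|uL2]; last by case: (L2M u uL2).
  by apply: (subM p); [exact: mem_head | exact: L1M].
move=> b Mb; have [q] := coverM b Mb; rewrite inE => /orP[/eqP -> Mpb|qP Mqb].
  have [u [uL1 ub]] := L1b b Mpb.
  by exists u; split => //; apply: List.in_or_app; left.
have [u [uL2 ub]] := L2b b (conj Mb (ex_intro2 _ _ q qP Mqb)).
by exists u; split => //; apply: List.in_or_app; right.
Qed.

Lemma size_filter_predC1 (C : seq nat) i :
  i \in C -> (size (filter (predC1 i) C) < size C)%N.
Proof.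
move=> iC; rewrite size_filter -(count_predC (pred1 i) C) -[X in (X < _)%N]add0n.
by rewrite ltn_add2r -has_count has_pred1.
Qed.

(* Dickson's lemma, by induction on the number of coordinates: the elements [b] of
   [M] not above a fixed [a] have [b i < a i] for some [i], and fixing the value
   of [b i] removes the coordinate [i]. *)
Lemma dickson (C : seq nat) (M : (nat -> nat) -> Prop) :
  exists L, dickson_basis C M L.
Proof.
have [n] := ubnP (size C); elim: n C M => // n IH C M sizeC.
have [[a Ma]|noM] := Classical_Prop.classic (exists a, M a); last first.
  by exists [::]; split => // b Mb; case: noM; exists b.
pose below i b := M b /\ (b i < a i)%N.
have below_basis i : i \in C -> exists L, dickson_basis C (below i) L.
  move=> iC; apply: (@dickson_basis_cover _ C (iota 0 (a i))
    (fun v b => M b /\ b i = v)) => [v _|v b|b [Mb lt_bi]].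
  - have [L [LM Lb]] := IH (filter (predC1 i) C) (fun b => M b /\ b i = v)
      (leq_trans (size_filter_predC1 iC) sizeC).
    exists L; split => // b Mbv; have [u [uL ub]] := Lb b Mbv.
    exists u; split => // j jC; have [->|ji] := eqVneq j i.
      by have [_ ->] := LM u uL; case: Mbv => _ ->.
    by apply: ub; rewrite mem_filter /= ji.
  - by rewrite mem_iota add0n => lt_va [Mb bv]; split; rewrite ?bv.
  - by exists (b i) => //; rewrite mem_iota.
have [L [LM Lb]] : exists L,
    dickson_basis C (fun b => M b /\ ~~ all (fun i => a i <= b i)%N C) L.
  apply: (@dickson_basis_cover _ C C below) => // [i b iC [Mb lt_bi]|b [Mb]].
    by split => //; apply/allPn; exists i; rewrite // -ltnNge.
  by case/allPn => i iC; rewrite -ltnNge; exists i.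
exists (a :: L); split => [u [<-|/LM []]|b Mb] //.
have [/allP geab|ngeab] := boolP (all (fun i => a i <= b i)%N C).
  by exists a; split; [left | exact: geab].
by have [u [uL ub]] := Lb b (conj Mb ngeab); exists u; split => //; right.
Qed.

Local Open Scope ring_scope.

Lemma sum_by_key (T G : eqType) (V : nmodType) (l : seq T) (key : T -> G)
    (F : T -> V) :
  \sum_(p <- l) F p = \sum_(g <- undup (map key l)) \sum_(p <- l | key p == g) F p.
Proof.
rewrite (exchange_big_dep predT) //= big_seq_cond [RHS]big_seq_cond.
apply: eq_bigr => p /andP[pl _]; rewrite -big_filter.
rewrite (@eq_filter _ _ (pred1 (key p))) => [|g]; last by rewrite /= eq_sym.
by rewrite filter_pred1_uniq ?undup_uniq ?mem_undup ?map_f // big_seq1.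
Qed.

Lemma mulrz_inj (V : zmodType) (d : V) :
  (forall n : nat, (0 < n)%N -> d *+ n != 0) -> injective (fun m : int => d *~ m).
Proof.
move=> d_inf m m' /= /eqP; rewrite -subr_eq0 -mulrzBr => /eqP dmm'.
apply/eqP; rewrite -subr_eq0; apply/eqP; move: dmm'.
case: (m - m') => [[|n]|n] // dn; move: (d_inf _ (ltn0Sn n)).
  by rewrite pmulrn dn eqxx.
by move/eqP: dn; rewrite NegzE mulrNz -pmulrn oppr_eq0 => /eqP ->; rewrite eqxx.
Qed.

Section Grading.
Variables (G : zmodType) (B : comNzRingType) (Bi : G -> B -> Prop).
Hypothesis gr : is_grading Bi.

Lemma grade0 g : Bi g 0. Proof. by case: gr. Qed.

Lemma gradeB g x y : Bi g x -> Bi g y -> Bi g (x - y).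
Proof. by case: gr => _ gB _ _ _; apply: gB. Qed.

Lemma gradeN g x : Bi g x -> Bi g (- x).
Proof. by move=> gx; rewrite -sub0r; apply: gradeB => //; apply: grade0. Qed.

Lemma gradeD g x y : Bi g x -> Bi g y -> Bi g (x + y).
Proof. by move=> gx gy; rewrite -[y]opprK; apply: gradeB => //; apply: gradeN. Qed.

Lemma gradeM g h x y : Bi g x -> Bi h y -> Bi (g + h) (x * y).
Proof. by case: gr => _ _ gM _ _; apply: gM. Qed.

Lemma gradeX g x n : Bi 0 1 -> Bi g x -> Bi (g *+ n) (x ^+ n).
Proof.
move=> g1 gx; elim: n => [|n IHn]; first by rewrite expr0 mulr0n.
by rewrite exprS mulrS; apply: gradeM.
Qed.

Lemma grade_sum (I : Type) g (r : seq I) (P : pred I) (F : I -> B) :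
  (forall i, P i -> Bi g (F i)) -> Bi g (\sum_(i <- r | P i) F i).
Proof. by move=> gF; apply: big_ind => //; [apply: grade0 | apply: gradeD]. Qed.

Lemma grade_key_sum_eq0 (l : seq (G * B)) :
  (forall p, p \in l -> Bi p.1 p.2) -> \sum_(p <- l) p.2 = 0 ->
  forall g, \sum_(p <- l | p.1 == g) p.2 = 0.
Proof.
move=> gl l0 g; pose c g := \sum_(p <- l | p.1 == g) p.2.
have gc h : Bi h (c h).
  by rewrite /c big_seq_cond; apply: grade_sum => p /andP[/gl + /eqP <-].
case: gr => _ _ _ _ direct.
have {}direct := direct _ c (undup_uniq (map fst l)) gc.
rewrite -sum_by_key in direct; have [gl'|gl'] := boolP (g \in undup (map fst l)).
  exact: direct.
rewrite big1_seq // => p /andP[/eqP pg pl]; move: gl'.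
by rewrite mem_undup -pg map_f.
Qed.

Lemma grade_component (l : seq (G * B)) g x :
  (forall p, p \in l -> Bi p.1 p.2) -> Bi g x -> x = \sum_(p <- l) p.2 ->
  x = \sum_(p <- l | p.1 == g) p.2.
Proof.
move=> gl gx xl; have glx q : q \in (g, - x) :: l -> Bi q.1 q.2.
  by rewrite inE => /orP[/eqP -> /=|/gl //]; apply: gradeN.
have := grade_key_sum_eq0 glx _ g; rewrite !big_cons /= eqxx -xl addNr.
by move=> /(_ erefl) /eqP; rewrite addrC subr_eq0 => /eqP.
Qed.

Lemma grade_diff_eq0 g h x : Bi g x -> Bi h x -> g != h -> x = 0.
Proof.
move=> gx hx ngh; have := @grade_component [:: (h, x)] g x.
rewrite big_seq1 big_cons big_nil /= eq_sym (negPf ngh); apply=> //.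
by move=> p; rewrite inE => /eqP ->.
Qed.

End Grading.

Section Generators.
Variables (G : zmodType) (k : fieldType) (B : comNzRingType).
Variables (phi : {rmorphism k -> B}) (Bi : G -> B -> Prop).

Lemma gen_alg_sub (S S' : seq B) b : (forall x, x \in S -> gen_alg phi S' x) ->
  gen_alg phi S b -> gen_alg phi S' b.
Proof.
move=> SS'; elim=> [c|x /SS' //|x y _ Sx _ Sy|x y _ Sx _ Sy].
- exact: gen_const.
- exact: gen_add.
- exact: gen_mul.
Qed.

Lemma gen_alg_sum (S : seq B) (l : seq (G * B)) :
  (forall p, p \in l -> p.2 \in S) -> gen_alg phi S (\sum_(p <- l) p.2).
Proof.
move=> lS; rewrite big_seq; apply: big_ind => [||p /lS]; last exact: gen_gen.
  by rewrite -(rmorph0 phi); apply: gen_const.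
exact: gen_add.
Qed.

Lemma homogeneous_generators : is_grading Bi -> fin_gen_alg phi ->
  exists X : seq (G * B),
    (forall p, p \in X -> Bi p.1 p.2) /\ forall b, gen_alg phi (map snd X) b.
Proof.
move=> gr [S genS]; suff [X [gX SX]] : exists X : seq (G * B),
    (forall p, p \in X -> Bi p.1 p.2) /\ forall x, x \in S -> gen_alg phi (map snd X) x.
  by exists X; split => // b; apply: gen_alg_sub SX _.
elim: S {genS} => [|x S [X [gX SX]]]; first by exists [::].
case: gr => _ _ _ decomp _; have [s [c [_ gc ->]]] := decomp x.
exists ([seq (g, c g) | g <- s] ++ X); split.
  by move=> p; rewrite mem_cat => /orP[/mapP[g _ ->]|/gX].
move=> y; rewrite inE => /orP[/eqP ->|yS].
  rewrite -(big_map (fun g => (g, c g)) predT snd); apply: gen_alg_sum => p ps.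
  by rewrite map_cat mem_cat map_f.
apply: gen_alg_sub (SX y yS) => z zX; apply: gen_gen.
by rewrite map_cat mem_cat zX orbT.
Qed.

End Generators.

Definition transcendental_over (F : comNzRingType) (A : F -> Prop) (t : F) :=
  [/\ A 1, (forall x y, A x -> A y -> A (x - y)),
      (forall x y, A x -> A y -> A (x * y)) &
      forall p : {poly F}, (forall i, A p`_i) -> p.[t] = 0 -> p = 0].

Section PolyDerivation.
Variables (F : idomainType) (A : F -> Prop) (t : F).
Hypothesis At : transcendental_over A t.

Lemma memA0 : A 0.
Proof. by case: At => A1 AB _ _; rewrite -(subrr 1); apply: AB. Qed.

Lemma memAD x y : A x -> A y -> A (x + y).
Proof.
case: At => _ AB _ _ Ax Ay; rewrite -[y]opprK -[- y]sub0r.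
by apply: (AB) => //; apply: AB => //; apply: memA0.
Qed.

Lemma memAMn x n : A x -> A (x *+ n).
Proof.
move=> Ax; elim: n => [|n IHn]; first by rewrite mulr0n; apply: memA0.
by rewrite mulrS; apply: memAD.
Qed.

Lemma memA_sum (I : Type) (r : seq I) (P : pred I) (h : I -> F) :
  (forall i, P i -> A (h i)) -> A (\sum_(i <- r | P i) h i).
Proof. by move=> Ah; apply: big_ind => //; [apply: memA0 | apply: memAD]. Qed.

Definition coefA (p : {poly F}) := forall i, A p`_i.

Lemma coefA0 : coefA 0. Proof. by move=> i; rewrite coef0; apply: memA0. Qed.

Lemma coefAC c : A c -> coefA c%:P.
Proof. by move=> Ac i; rewrite coefC; case: ifP => // _; apply: memA0. Qed.

Lemma coefA_X : coefA 'X.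
Proof.
by case: At => A1 _ _ _ i; rewrite coefX; case: (i == 1)%N => //; apply: memA0.
Qed.

Lemma coefAD p q : coefA p -> coefA q -> coefA (p + q).
Proof. by move=> Ap Aq i; rewrite coefD; apply: memAD. Qed.

Lemma coefAB p q : coefA p -> coefA q -> coefA (p - q).
Proof. by case: At => _ AB _ _ Ap Aq i; rewrite coefB; apply: AB. Qed.

Lemma coefAM p q : coefA p -> coefA q -> coefA (p * q).
Proof.
by case: At => _ _ AM _ Ap Aq i; rewrite coefM; apply: memA_sum => j _; apply: AM.
Qed.

Lemma coefA_deriv p : coefA p -> coefA p^`().
Proof. by move=> Ap i; rewrite coef_deriv; apply: memAMn. Qed.

Lemma coefA_derivn p n : coefA p -> coefA p^`(n).
Proof.
by move=> Ap; elim: n => [|n IHn]; rewrite ?derivn0 // derivnS; apply: coefA_deriv.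
Qed.

Lemma coefA_horner_inj p q : coefA p -> coefA q -> p.[t] = q.[t] -> p = q.
Proof.
case: At => _ _ _ tr Ap Aq pq; apply/eqP; rewrite -subr_eq0; apply/eqP.
by apply: tr; [apply: coefAB | rewrite hornerD hornerN pq subrr].
Qed.

Definition polyA x := exists p, coefA p /\ x = p.[t].

(* [d/dt] on A[t]; the choice of [p] is irrelevant since [t] is transcendental. *)
Definition ddt (x : F) : F :=
  (epsilon (inhabits 0) (fun p : {poly F} => coefA p /\ x = p.[t]))^`().[t].

Lemma ddt_horner p : coefA p -> ddt p.[t] = p^`().[t].
Proof.
move=> Ap; rewrite /ddt; set P := fun q => _.
have [Aq /esym pq] := epsilon_spec (inhabits 0) P (ex_intro _ p (conj Ap erefl)).
by rewrite (coefA_horner_inj Aq Ap pq).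
Qed.

Lemma polyA_ddt x : polyA x -> polyA (ddt x).
Proof.
move=> [p [Ap ->]]; rewrite ddt_horner //.
by exists p^`(); split => //; apply: coefA_deriv.
Qed.

Lemma polyA0 : polyA 0. Proof. by exists 0; split; [apply: coefA0 | rewrite horner0]. Qed.

Lemma polyAD x y : polyA x -> polyA y -> polyA (x + y).
Proof.
move=> [p [Ap ->]] [q [Aq ->]].
by exists (p + q); split; [apply: coefAD | rewrite hornerD].
Qed.

Lemma ddtC c : A c -> ddt c = 0.
Proof.
by move=> Ac; rewrite -[c](hornerC c t) ddt_horner ?derivC ?horner0 //; apply: coefAC.
Qed.

Lemma ddt0 : ddt 0 = 0. Proof. exact: ddtC memA0. Qed.

Lemma ddt1 : ddt 1 = 0. Proof. by case: At => A1 _ _ _; apply: ddtC. Qed.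

Lemma ddt_t : ddt t = 1.
Proof. by rewrite -[t](hornerX t) ddt_horner ?derivX ?hornerC //; apply: coefA_X. Qed.

Lemma ddtD x y : polyA x -> polyA y -> ddt (x + y) = ddt x + ddt y.
Proof.
move=> [p [Ap ->]] [q [Aq ->]].
by rewrite -hornerD !ddt_horner ?derivD ?hornerD //; apply: coefAD.
Qed.

Lemma ddtN x : polyA x -> ddt (- x) = - ddt x.
Proof.
move=> [p [Ap ->]].
have A_p : coefA (- p) by rewrite -sub0r; apply: coefAB => //; apply: coefA0.
by rewrite -hornerN !ddt_horner // derivN hornerN.
Qed.

Lemma ddtM x y : polyA x -> polyA y -> ddt (x * y) = x * ddt y + ddt x * y.
Proof.
move=> [p [Ap ->]] [q [Aq ->]].
by rewrite -hornerM !ddt_horner ?derivM ?hornerD ?hornerM 1?addrC //; apply: coefAM.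
Qed.

Lemma ddt_sum (I : Type) (r : seq I) (P : pred I) (h : I -> F) :
  (forall i, P i -> polyA (h i)) ->
  ddt (\sum_(i <- r | P i) h i) = \sum_(i <- r | P i) ddt (h i).
Proof.
move=> Ah; elim: r => [|i r IHr]; first by rewrite !big_nil ddt0.
rewrite !big_cons; case: ifP => // Pi; rewrite ddtD ?IHr //; first exact: Ah.
by apply: (big_ind polyA) => //; [apply: polyA0 | apply: polyAD].
Qed.

Lemma ddt_nilpotent x : polyA x -> exists n, forall j, (n <= j)%N -> iter j ddt x = 0.
Proof.
move=> [p [Ap ->]]; exists (size p) => j le_pj.
have iter_ddt i : iter i ddt p.[t] = p^`(i).[t].
  by elim: i => [|i /= ->]; rewrite ?ddt_horner ?derivnS //; apply: coefA_derivn.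
by rewrite iter_ddt derivn_poly0 ?horner0.
Qed.

(* The units of A[t] lie in A. *)
Lemma ddt_unit x y : polyA x -> polyA y -> x * y = 1 -> ddt x = 0.
Proof.
case: At => A1 _ _ _ [p [Ap ->]] [q [Aq ->]] pq_t.
have pq : p * q = 1 by apply: coefA_horner_inj; rewrite ?hornerM ?pq_t ?hornerC //;
  [apply: coefAM | apply: coefAC].
have : p \is a GRing.unit by apply/unitrP; exists q; rewrite mulrC pq.
rewrite poly_unitE => /andP[/size_poly1P [c _ p_c] _].
by rewrite ddt_horner // p_c derivC horner0.
Qed.

End PolyDerivation.

Lemma tofrac_inj (R : idomainType) : injective (@FracField.tofrac R).
Proof. by move=> x y /eqP; rewrite tofrac_eq => /eqP. Qed.

Section Cylinder.
Variables (G : zmodType) (k : fieldType) (B : idomainType).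
Variables (phi : {rmorphism k -> B}) (Bi : G -> B -> Prop) (f : B) (d : G).
Hypotheses (gr : is_grading Bi) (phiB : forall c, Bi 0 (phi c)).
Hypotheses (f_neq0 : f != 0) (fd : Bi d f).
Hypothesis d_inf : forall n : nat, (0 < n)%N -> d *+ n != 0.

Local Notation "x %:F" := (@FracField.tofrac B x).
Local Notation u := (f%:F).
Local Notation R := (deg0_loc Bi d f).

Variables (A : {fraction B} -> Prop) (t : {fraction B}).
Hypotheses (At : transcendental_over A t) (AR : forall x, A x -> R x) (Rt : R t).
Hypothesis R_polyA : forall x, R x -> polyA A t x.

Local Notation ddt := (ddt A t).

Lemma grade1 : Bi 0 1. Proof. by rewrite -(rmorph1 phi). Qed.

Lemma grade_fX n : Bi (d *+ n) (f ^+ n). Proof. exact: (gradeX gr n grade1 fd). Qed.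

Lemma unit_f : u \is a GRing.unit. Proof. by rewrite unitfE tofrac_eq0. Qed.

Lemma dmulrz_inj : injective (fun m : int => d *~ m). Proof. exact: mulrz_inj. Qed.

Lemma deg0_locD x y : R x -> R y -> R (x + y).
Proof.
move=> [n [b [bn ->]]] [n' [b' [bn' ->]]].
exists (n + n')%N, (b * f ^+ n' + b' * f ^+ n); split.
  by rewrite mulrnDr; apply: (gradeD gr); [|rewrite addrC];
    apply: (gradeM gr) => //; apply: grade_fX.
by rewrite addf_div ?tofrac_eq0 ?expf_neq0 // -!tofracM -tofracD -exprD.
Qed.

Lemma deg0_locM x y : R x -> R y -> R (x * y).
Proof.
move=> [n [b [bn ->]]] [n' [b' [bn' ->]]].
exists (n + n')%N, (b * b'); split; first by rewrite mulrnDr; apply: (gradeM gr).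
by rewrite mulf_div -!tofracM -exprD.
Qed.

Lemma deg0_loc1 : R 1.
Proof.
by exists 0%N, 1; rewrite mulr0n expr0 tofrac1 divr1; split => //; apply: grade1.
Qed.

Lemma deg0_locX x n : R x -> R (x ^+ n).
Proof.
move=> Rx; elim: n => [|n IHn]; first by rewrite expr0; apply: deg0_loc1.
by rewrite exprS; apply: deg0_locM.
Qed.

Lemma polyA_deg0_loc x : polyA A t x -> R x.
Proof.
move=> [p [Ap ->]]; rewrite horner_coef; apply: (big_ind R) => [||i _].
- by exists 0%N, 0; rewrite tofrac0 mul0r; split => //; apply: (grade0 gr).
- exact: deg0_locD.
- by apply: deg0_locM; [apply: AR | apply: deg0_locX].
Qed.

Definition dehom (m : int) (s : B) : {fraction B} := s%:F * u ^ (- m).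

Lemma deg0_loc_dehom m s : Bi (d *~ m) s -> R (dehom m s).
Proof.
rewrite /dehom; case: m => n sm.
  by exists n, s; split => //; rewrite -invr_expz -exprnP tofracXn.
exists 0%N, (s * f ^+ n.+1); split.
  rewrite mulr0n -(addNr (d *+ n.+1)); apply: (gradeM gr _ (grade_fX _)).
  by rewrite NegzE mulrNz -pmulrn in sm.
by rewrite expr0 tofrac1 divr1 tofracM tofracXn NegzE opprK.
Qed.

Lemma polyA_dehom m s : Bi (d *~ m) s -> polyA A t (dehom m s).
Proof. by move=> sm; apply/R_polyA/deg0_loc_dehom. Qed.

Lemma tofrac_dehom m s : s%:F = dehom m s * u ^ m.
Proof. by rewrite /dehom -mulrA -exprzDr ?unit_f // addNr expr0z mulr1. Qed.

Lemma dehomD m s s' : dehom m (s + s') = dehom m s + dehom m s'.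
Proof. by rewrite /dehom tofracD mulrDl. Qed.

Lemma dehomN m s : dehom m (- s) = - dehom m s.
Proof. by rewrite /dehom tofracN mulNr. Qed.

Lemma dehom0 m : dehom m 0 = 0.
Proof. by rewrite /dehom tofrac0 mul0r. Qed.

Lemma dehom_sum (I : Type) m (r : seq I) (P : pred I) (h : I -> B) :
  dehom m (\sum_(i <- r | P i) h i) = \sum_(i <- r | P i) dehom m (h i).
Proof. exact: (big_morph (dehom m) (dehomD m) (dehom0 m)). Qed.

Lemma dehomM m m' s s' : dehom (m + m') (s * s') = dehom m s * dehom m' s'.
Proof. by rewrite /dehom tofracM opprD exprzDr ?unit_f //; ring. Qed.

Lemma dehom_fX (n : nat) : dehom n (f ^+ n) = 1.
Proof. by rewrite /dehom tofracXn exprnP -exprzDr ?unit_f // subrr expr0z. Qed.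

Lemma ddt_dehomM m m' n s s' : Bi (d *~ m) s -> Bi (d *~ m') s' ->
  u ^ (m + m' + n) * ddt (dehom (m + m') (s * s')) =
  s%:F * (u ^ (m' + n) * ddt (dehom m' s')) + (u ^ (m + n) * ddt (dehom m s)) * s'%:F.
Proof.
move=> sm sm'; rewrite dehomM (ddtM At (polyA_dehom sm) (polyA_dehom sm')).
by rewrite (tofrac_dehom m s) (tofrac_dehom m' s') !exprzDr ?unit_f //; ring.
Qed.

(* [f^(m+N) * d/dt (s / f^m)] is the value at [s] of the derivation [f^N d/dt];
   this says that it lies in [B]. *)
Definition pole_le (N : nat) (m : int) (s : B) := exists b,
  Bi (d *~ (m + N%:Z)) b /\ b%:F = u ^ (m + N%:Z) * ddt (dehom m s).

Lemma pole_le_mono N N' m s : (N <= N')%N -> pole_le N m s -> pole_le N' m s.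
Proof.
move=> /subnK <-; elim: (N' - N)%N => [|n IHn] // /IHn [b [bm e]].
exists (b * f); rewrite addSn -addn1 PoszD addrA.
split; first by rewrite mulrzDr mulr1z; apply: (gradeM gr).
by rewrite exprzDr ?unit_f // tofracM e; ring.
Qed.

Lemma pole_leD N m s s' : Bi (d *~ m) s -> Bi (d *~ m) s' ->
  pole_le N m s -> pole_le N m s' -> pole_le N m (s + s').
Proof.
move=> sm sm' [b [bm e]] [b' [bm' e']].
exists (b + b'); split; first exact: (gradeD gr).
by rewrite tofracD e e' dehomD (ddtD At (polyA_dehom sm) (polyA_dehom sm')) mulrDr.
Qed.

Lemma pole_leM N m m' s s' : Bi (d *~ m) s -> Bi (d *~ m') s' ->
  pole_le N m s -> pole_le N m' s' -> pole_le N (m + m') (s * s').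
Proof.
move=> sm sm' [b [bm e]] [b' [bm' e']]; exists (s * b' + b * s'); split.
  apply: (gradeD gr); first by rewrite -addrA mulrzDr; apply: (gradeM gr).
  by rewrite addrAC mulrzDr; apply: (gradeM gr).
by rewrite ddt_dehomM // tofracD !tofracM e e'.
Qed.

Lemma pole_le0 N m : pole_le N m 0.
Proof.
by exists 0; rewrite dehom0 ddt0 // mulr0 tofrac0; split => //; apply: (grade0 gr).
Qed.

Lemma pole_le_phi N c : pole_le N 0 (phi c).
Proof.
exists 0; rewrite tofrac0; split; first exact: (grade0 gr).
have R_phi c' : polyA A t (phi c')%:F.
  by rewrite (tofrac_dehom 0) expr0z mulr1; apply: polyA_dehom; rewrite mulr0z.
have [->|c0] := eqVneq c 0; first by rewrite rmorph0 dehom0 ddt0 ?mulr0.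
rewrite /dehom oppr0 expr0z mulr1 (@ddt_unit _ A t At _ (phi c^-1)%:F) ?mulr0 //.
by rewrite -tofracM -rmorphM mulfV // rmorph1 tofrac1.
Qed.

Lemma pole_le_exists m s : Bi (d *~ m) s -> exists N, pole_le N m s.
Proof.
move=> sm; have [n [b [bn e]]] := polyA_deg0_loc (polyA_ddt At (polyA_dehom sm)).
have [j mj] : exists j : nat, m + `|m|%N%:Z = j%:Z.
  case: m {sm e} => n'; first by exists (n' + n')%N; rewrite PoszD.
  by exists 0%N; rewrite NegzE addNr.
exists (n + `|m|)%N, (b * f ^+ j).
have -> : m + (n + `|m|)%N%:Z = (n + j)%N%:Z by rewrite PoszD addrCA mj -PoszD.
split; first by rewrite -pmulrn mulrnDr; apply: (gradeM gr _ (grade_fX _)).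
rewrite e tofracM !tofracXn -exprnP exprD.
have fn_neq0 : u ^+ n != 0 by rewrite -tofracXn tofrac_eq0 expf_neq0.
by rewrite [u ^+ n * _]mulrC -mulrA [u ^+ n * _]mulrCA mulfV // mulr1 mulrC.
Qed.

Section Monomials.
Variable X : seq (G * B).
Hypothesis X_homog : forall p, p \in X -> Bi p.1 p.2.
Hypothesis X_gen : forall b, gen_alg phi (map snd X) b.

Local Notation r := (size X).

Definition gen i := (nth (0, 0) X i).2.
Definition gen_deg i := (nth (0, 0) X i).1.
Definition monomial (a : nat -> nat) : B := \prod_(i < r) gen i ^+ a i.
Definition mdeg (a : nat -> nat) : G := \sum_(i < r) gen_deg i *+ a i.
Definition in_mspan b :=
  exists l : seq (k * (nat -> nat)), b = \sum_(q <- l) phi q.1 * monomial q.2.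

Lemma grade_monomial a g : mdeg a = g -> Bi g (monomial a).
Proof.
move=> <-; apply: (big_ind2 Bi grade1) => [h h' x x'|i _]; first exact: gradeM.
by apply: (gradeX gr) grade1 _; apply/X_homog/mem_nth.
Qed.

Lemma monomialD a a' : monomial (fun i => a i + a' i)%N = monomial a * monomial a'.
Proof. by rewrite /monomial -big_split; apply: eq_bigr => i _; rewrite exprD. Qed.

Lemma mdegD a a' : mdeg (fun i => a i + a' i)%N = mdeg a + mdeg a'.
Proof. by rewrite /mdeg -big_split; apply: eq_bigr => i _; rewrite mulrnDr. Qed.

Lemma eq_monomial a a' : (forall i, (i < r)%N -> a i = a' i) -> monomial a = monomial a'.
Proof. by move=> aa'; apply: eq_bigr => i _; rewrite aa'. Qed.

Lemma eq_mdeg a a' : (forall i, (i < r)%N -> a i = a' i) -> mdeg a = mdeg a'.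
Proof. by move=> aa'; apply: eq_bigr => i _; rewrite aa'. Qed.

Lemma monomial0 : monomial (fun _ => 0%N) = 1.
Proof. by apply: big1 => i _; rewrite expr0. Qed.

Lemma mdeg0 : mdeg (fun _ => 0%N) = 0.
Proof. by apply: big1 => i _; rewrite mulr0n. Qed.

Lemma in_mspanD b b' : in_mspan b -> in_mspan b' -> in_mspan (b + b').
Proof. by move=> [l ->] [l' ->]; exists (l ++ l'); rewrite big_cat. Qed.

Lemma in_mspanM b b' : in_mspan b -> in_mspan b' -> in_mspan (b * b').
Proof.
move=> [l ->] [l' ->].
exists [seq (q.1 * q'.1, fun i => (q.2 i + q'.2 i)%N)
  | q : k * (nat -> nat) <- l, q' : k * (nat -> nat) <- l'].
rewrite big_allpairs_dep mulr_suml; apply: eq_bigr => q _.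
by rewrite mulr_sumr; apply: eq_bigr => q' _ /=; rewrite monomialD rmorphM; ring.
Qed.

Lemma monomial_delta i : (i < r)%N -> monomial (fun j => nat_of_bool (j == i)) = gen i.
Proof.
move=> ir; rewrite /monomial (bigD1 (Ordinal ir)) //= eqxx expr1 big1 ?mulr1 // => j.
by rewrite -val_eqE /= => /negPf ->; rewrite expr0.
Qed.

Lemma in_mspan_all b : in_mspan b.
Proof.
elim: (X_gen b) => [c|_ /mapP[p pX ->]|x y _ ? _ ?|x y _ ? _ ?]; last 2 first.
- exact: in_mspanD.
- exact: in_mspanM.
- by exists [:: (c, fun _ => 0%N)]; rewrite big_seq1 monomial0 mulr1.
exists [:: (1, fun j => nat_of_bool (j == index p X))].
by rewrite big_seq1 rmorph1 mul1r monomial_delta ?index_mem // /gen nth_index.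
Qed.

Definition nonzero_veronese_exp (a : nat -> nat) :=
  (exists i, (i < r)%N /\ a i != 0%N) /\ exists m, mdeg a = d *~ m.

Lemma pole_le_list (L : seq (nat -> nat)) :
  (forall a, List.In a L -> nonzero_veronese_exp a) ->
  exists N, forall a, List.In a L ->
    forall m, mdeg a = d *~ m -> pole_le N m (monomial a).
Proof.
elim: L => [|a0 L IHL] LM; first by exists 0%N.
have [N1 N1L] := IHL (fun a aL => LM a (or_intror aL)).
have [_ [m0 a0m0]] := LM a0 (or_introl erefl).
have [N0 N0a0] := pole_le_exists (grade_monomial a0m0).
exists (maxn N0 N1) => a [<-|aL] m am.
  rewrite -(dmulrz_inj (etrans (esym a0m0) am)).
  by apply: pole_le_mono N0a0; apply: leq_maxl.
by apply: pole_le_mono (N1L a aL m am); apply: leq_maxr.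
Qed.

(* Gordan's lemma in disguise: by Dickson's lemma the monoid of exponents of
   monomials of degree in <d> is generated by finitely many minimal elements. *)
Lemma pole_le_monomial :
  exists N, forall a m, mdeg a = d *~ m -> pole_le N m (monomial a).
Proof.
have [L [LM Lmin]] := dickson (iota 0 r) nonzero_veronese_exp.
have [N NL] := pole_le_list LM; exists N => a.
have [n] := ubnP (\sum_(i < r) a i); elim: n a => // n IHn a a_lt m am.
have [/forallP a0|/forallPn[i0 ai0]] := boolP [forall i : 'I_r, a i == 0%N].
  have a0' i : (i < r)%N -> a i = 0%N by move=> ir; apply/eqP/(a0 (Ordinal ir)).
  have -> : m = 0 by apply: dmulrz_inj; rewrite /= -am (eq_mdeg a0') mdeg0 mulr0z.
  by rewrite (eq_monomial a0') monomial0 -(rmorph1 phi); apply: pole_le_phi.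
have a_exp : nonzero_veronese_exp a by split; [exists i0 | exists m].
have [u [uL ua]] := Lmin a a_exp.
have [[i1 [i1r ui1]] [mu um]] := LM u uL.
pose a' i := (a i - u i)%N.
have a_split i : (i < r)%N -> a i = (u i + a' i)%N.
  by move=> ir; rewrite /a' subnKC // ua // mem_iota.
have a'm : mdeg a' = d *~ (m - mu).
  by rewrite mulrzBr -am -um (eq_mdeg a_split) mdegD addrC addKr.
have a'_lt : (\sum_(i < r) a' i < n)%N.
  have sum_a : (\sum_(i < r) a i = \sum_(i < r) u i + \sum_(i < r) a' i)%N.
    by rewrite -big_split; apply: eq_bigr => i _; apply: a_split.
  have : (0 < \sum_(i < r) u i)%N by rewrite (bigD1 (Ordinal i1r)) //= addn_gt0 lt0n ui1.
  by move: a_lt; rewrite sum_a; lia.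
have := pole_leM (grade_monomial um) (grade_monomial a'm) (NL u uL mu um)
  (IHn a' a'_lt _ a'm).
by rewrite -monomialD -(eq_monomial a_split) addrC subrK.
Qed.

Lemma pole_le_uniform : exists N, forall m s, Bi (d *~ m) s -> pole_le N m s.
Proof.
have [N NM] := pole_le_monomial; exists N => m s sm.
have [l sl] := in_mspan_all s.
pose term q := (mdeg q.2, phi q.1 * monomial q.2 : B).
have grade_term q : Bi (term q).1 (term q).2.
  rewrite -[(term q).1]add0r.
  by apply: (gradeM gr); [apply: phiB | apply: grade_monomial].
have := @grade_component _ _ _ gr (map term l) _ _ _ sm.
rewrite !big_map => -> //; last first.
  move=> p /(nthP (term (0, fun _ => 0%N))) [i]; rewrite size_map => il <-.
  by rewrite (nth_map (0, fun _ => 0%N)) //; apply: grade_term.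
set S := \sum_(_ <- _ | _) _; suff : Bi (d *~ m) S /\ pole_le N m S by case.
apply: (big_ind (fun x => Bi (d *~ m) x /\ pole_le N m x)) => [||q /eqP /= qm].
- by split; [apply: (grade0 gr) | apply: pole_le0].
- by move=> x y [xm Nx] [ym Ny]; split; [apply: (gradeD gr) | apply: pole_leD].
split; first by rewrite -qm; apply: grade_term.
rewrite -[m]add0r; apply: pole_leM (pole_le_phi _ _) (NM _ _ qm).
  by rewrite mulr0z.
exact: grade_monomial.
Qed.

End Monomials.

Section Derivation.
Variable N : nat.
Hypothesis N_pole : forall m s, Bi (d *~ m) s -> pole_le N m s.

Definition dhom m s : B :=
  epsilon (inhabits 0) (fun b => b%:F = u ^ (m + N%:Z) * ddt (dehom m s)).

Lemma dhom_spec m s : Bi (d *~ m) s ->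
  (dhom m s)%:F = u ^ (m + N%:Z) * ddt (dehom m s) /\ Bi (d *~ (m + N%:Z)) (dhom m s).
Proof.
move=> sm; have [b [bm e]] := N_pole sm.
have := epsilon_spec (inhabits 0) (fun b => b%:F = _) (ex_intro _ b e).
by rewrite -/(dhom m s) => e'; split => //; rewrite (tofrac_inj (etrans e' (esym e))).
Qed.

Lemma tofrac_dhom m s : Bi (d *~ m) s ->
  (dhom m s)%:F = u ^ (m + N%:Z) * ddt (dehom m s).
Proof. by case/dhom_spec. Qed.

Lemma grade_dhom m s : Bi (d *~ m) s -> Bi (d *~ (m + N%:Z)) (dhom m s).
Proof. by case/dhom_spec. Qed.

Lemma dhomN m s : Bi (d *~ m) s -> dhom m (- s) = - dhom m s.
Proof.
move=> sm; apply: tofrac_inj; rewrite tofracN !tofrac_dhom ?dehomN ?(ddtN At) ?mulrN //.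
- exact: polyA_dehom.
- exact: (gradeN gr).
Qed.

Definition hom_decomp (l : seq (int * B)) := forall p, p \in l -> Bi (d *~ p.1) p.2.

Definition decomp x : seq (int * B) :=
  epsilon (inhabits [::]) (fun l => hom_decomp l /\ x = \sum_(p <- l) p.2).

(* [f^N d/dt] on [B^(d)], computed on a chosen decomposition into homogeneous
   components; [Dcyl_sum] shows that any decomposition gives the same value. *)
Definition Dcyl x := \sum_(p <- decomp x) dhom p.1 p.2.

Lemma Veronese_decomp x : Veronese Bi d x ->
  exists l, hom_decomp l /\ x = \sum_(p <- l) p.2.
Proof.
move=> [s [c [cm ->]]]; exists [seq (m, c m) | m <- s].
by rewrite big_map; split => // p /mapP[m _ ->].
Qed.

Lemma decomp_Veronese l : hom_decomp l -> Veronese Bi d (\sum_(p <- l) p.2).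
Proof.
move=> hl; exists (undup (map fst l)), (fun m => \sum_(p <- l | p.1 == m) p.2).
split; last exact: sum_by_key.
by move=> m; rewrite big_seq_cond; apply: (grade_sum gr) => p /andP[/hl + /eqP <-].
Qed.

Lemma Veronese_hom m s : Bi (d *~ m) s -> Veronese Bi d s.
Proof.
move=> sm; have := @decomp_Veronese [:: (m, s)]; rewrite big_seq1; apply.
by move=> p; rewrite inE => /eqP ->.
Qed.

Lemma tofrac_sum_dhom l : hom_decomp l ->
  (\sum_(p <- l) dhom p.1 p.2)%:F = \sum_(p <- l) u ^ (p.1 + N%:Z) * ddt (dehom p.1 p.2).
Proof.
move=> hl; rewrite rmorph_sum big_seq [RHS]big_seq.
by apply: eq_bigr => p /hl; apply: tofrac_dhom.
Qed.

(* Grouping by degree, each homogeneous component of a vanishing sum vanishes. *)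
Lemma sum_dhom_eq0 l : hom_decomp l -> \sum_(p <- l) p.2 = 0 ->
  \sum_(p <- l) dhom p.1 p.2 = 0.
Proof.
move=> hl l0; apply: tofrac_inj; rewrite tofrac_sum_dhom // tofrac0 (sum_by_key l fst).
apply: big1 => m _; rewrite big_seq_cond.
rewrite (eq_bigr (fun p => u ^ (m + N%:Z) * ddt (dehom m p.2))); last first.
  by move=> p /andP[_ /eqP ->].
have hlm p : (p \in l) && (p.1 == m) -> polyA A t (dehom m p.2).
  by case/andP => /hl + /eqP pm; rewrite pm; apply: polyA_dehom.
rewrite -mulr_sumr -(ddt_sum At _ hlm) -dehom_sum -big_seq_cond.
have hl' q : q \in [seq (d *~ p.1, p.2) | p <- l] -> Bi q.1 q.2.
  by case/mapP => p /hl + ->.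
have := grade_key_sum_eq0 gr hl' _ (d *~ m); rewrite !big_map => /(_ l0).
rewrite (eq_bigl (fun p => p.1 == m)) => [->|p]; first by rewrite dehom0 ddt0 ?mulr0.
by apply/eqP/eqP => [/dmulrz_inj|->].
Qed.

Lemma Dcyl_sum l : hom_decomp l -> Dcyl (\sum_(p <- l) p.2) = \sum_(p <- l) dhom p.1 p.2.
Proof.
move=> hl; rewrite /Dcyl /decomp; set P := fun l' => _.
have [hl0 e] := epsilon_spec (inhabits [::]) P (ex_intro _ l (conj hl erefl)).
set l0 := epsilon _ _ in hl0 e *.
pose l1 := l0 ++ [seq (p.1, - p.2) | p <- l].
have hl1 : hom_decomp l1.
  by move=> p; rewrite mem_cat => /orP[/hl0 //|/mapP[q /hl ? ->]]; apply: (gradeN gr).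
have := sum_dhom_eq0 hl1; rewrite !big_cat !big_map /= sumrN -e subrr => /(_ erefl).
have -> : \sum_(p <- l) dhom p.1 (- p.2) = - \sum_(p <- l) dhom p.1 p.2.
  by rewrite -sumrN big_seq [RHS]big_seq; apply: eq_bigr => p /hl; apply: dhomN.
by move/eqP; rewrite subr_eq0 => /eqP.
Qed.

Lemma Dcyl_hom m s : Bi (d *~ m) s -> Dcyl s = dhom m s.
Proof.
move=> sm; have := @Dcyl_sum [:: (m, s)]; rewrite !big_seq1; apply.
by move=> p; rewrite inE => /eqP ->.
Qed.

Lemma Dcyl_Veronese x : Veronese Bi d x -> Veronese Bi d (Dcyl x).
Proof.
move=> /Veronese_decomp[l [hl ->]]; rewrite Dcyl_sum //.
rewrite -(big_map (fun p => (p.1 + N%:Z, dhom p.1 p.2)) predT snd).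
by apply: decomp_Veronese => q /mapP[p /hl pm ->]; apply: grade_dhom.
Qed.

Lemma DcylD x y : Veronese Bi d x -> Veronese Bi d y -> Dcyl (x + y) = Dcyl x + Dcyl y.
Proof.
move=> /Veronese_decomp[l [hl ->]] /Veronese_decomp[l' [hl' ->]].
rewrite -big_cat !Dcyl_sum ?big_cat // => p.
by rewrite mem_cat => /orP[/hl|/hl'].
Qed.

Lemma dhomM m m' s s' : Bi (d *~ m) s -> Bi (d *~ m') s' ->
  dhom (m + m') (s * s') = s * dhom m' s' + dhom m s * s'.
Proof.
move=> sm sm'.
have ss'm : Bi (d *~ (m + m')) (s * s') by rewrite mulrzDr; apply: (gradeM gr).
by apply: tofrac_inj; rewrite tofracD !tofracM !tofrac_dhom // -ddt_dehomM.
Qed.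

Lemma DcylM x y : Veronese Bi d x -> Veronese Bi d y ->
  Dcyl (x * y) = x * Dcyl y + Dcyl x * y.
Proof.
move=> /Veronese_decomp[l [hl ->]] /Veronese_decomp[l' [hl' ->]].
pose L := [seq (p.1 + q.1, p.2 * q.2) | p <- l, q <- l'].
have hL : hom_decomp L.
  move=> z /allpairsP[[p q] [/hl pm /hl' qm ->]] /=.
  by rewrite mulrzDr; apply: (gradeM gr).
have -> : (\sum_(p <- l) p.2) * (\sum_(q <- l') q.2) = \sum_(z <- L) z.2.
  by rewrite big_allpairs_dep mulr_suml; apply: eq_bigr => p _; rewrite mulr_sumr.
rewrite !Dcyl_sum // big_allpairs_dep /= !mulr_suml -big_split /=.
rewrite big_seq [RHS]big_seq; apply: eq_bigr => p /hl pm.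
rewrite !mulr_sumr -big_split big_seq [RHS]big_seq /=.
by apply: eq_bigr => q /hl' qm; apply: dhomM.
Qed.

Lemma Dcyl_homogeneous i x : Veronese Bi d x -> Bi i x -> Bi (i + d *~ N%:Z) (Dcyl x).
Proof.
move=> /Veronese_decomp[l [hl ->]] xi.
have hl' q : q \in [seq (d *~ p.1, p.2) | p <- l] -> Bi q.1 q.2.
  by case/mapP => p /hl + ->.
rewrite (grade_component gr hl' xi) ?big_map // -big_filter Dcyl_sum; last first.
  by move=> p; rewrite mem_filter => /andP[_ /hl].
rewrite big_seq; apply: (grade_sum gr) => p; rewrite mem_filter => /andP[/eqP <- /hl pm].
by rewrite -mulrzDr; apply: grade_dhom.
Qed.

Lemma iter_Dcyl_hom m s j : Bi (d *~ m) s ->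
  Bi (d *~ (m + (j * N)%N%:Z)) (iter j Dcyl s) /\
  dehom (m + (j * N)%N%:Z) (iter j Dcyl s) = iter j ddt (dehom m s).
Proof.
move=> sm; elim: j => [|j [IHm IHe]]; first by rewrite mul0n addr0.
have -> : m + (j.+1 * N)%N%:Z = m + (j * N)%N%:Z + N%:Z.
  by rewrite mulSn PoszD addrCA addrC.
rewrite /= (Dcyl_hom IHm); split; first exact: grade_dhom.
rewrite /dehom tofrac_dhom // -IHe /dehom mulrAC -exprzDr ?unit_f //.
by rewrite subrr expr0z mul1r.
Qed.

Lemma iter_Dcyl_sum j l : hom_decomp l ->
  iter j Dcyl (\sum_(p <- l) p.2) = \sum_(p <- l) iter j Dcyl p.2.
Proof.
elim: j l => [|j IHj] l hl //; rewrite iterSr Dcyl_sum //.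
have hl1 : hom_decomp [seq (p.1 + N%:Z, dhom p.1 p.2) | p <- l].
  by move=> q /mapP[p /hl pm ->]; apply: grade_dhom.
rewrite -(big_map (fun p => (p.1 + N%:Z, dhom p.1 p.2)) predT snd) IHj // big_map.
rewrite big_seq [RHS]big_seq; apply: eq_bigr => p /hl pm.
by rewrite -(Dcyl_hom pm) -iterSr.
Qed.

Lemma Dcyl_nilpotent x : Veronese Bi d x -> exists n, iter n Dcyl x = 0.
Proof.
move=> /Veronese_decomp[l [hl ->]].
suff [n ln] : exists n, forall p, p \in l -> forall j, (n <= j)%N -> iter j Dcyl p.2 = 0.
  by exists n; rewrite iter_Dcyl_sum // big_seq big1 // => p pl; apply: ln.
elim: l hl => [|p l IHl] hl; first by exists 0%N.
have [n1 ln1] :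
    exists n, forall q, q \in l -> forall j, (n <= j)%N -> iter j Dcyl q.2 = 0.
  by apply: IHl => q ql; apply: hl; rewrite inE ql orbT.
have pm := hl p (mem_head _ _).
have [n0 pn0] := ddt_nilpotent At (polyA_dehom pm).
exists (maxn n0 n1) => q; rewrite inE => /orP[/eqP -> j|ql j];
  rewrite geq_max => /andP[jn0 jn1].
  apply: tofrac_inj; have [_ e] := iter_Dcyl_hom j pm.
  by rewrite (tofrac_dehom (p.1 + (j * N)%N%:Z)) e pn0 // mul0r tofrac0.
exact: ln1.
Qed.

Lemma Dcyl_fX n : Dcyl (f ^+ n) = 0.
Proof.
have fn : Bi (d *~ n%:Z) (f ^+ n) := grade_fX n; apply: tofrac_inj.
by rewrite (Dcyl_hom fn) tofrac_dhom // dehom_fX ddt1 // mulr0 tofrac0.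
Qed.

Lemma Dcyl_preimage_fX : exists n b, Veronese Bi d b /\ Dcyl b = f ^+ (n + N).
Proof.
have [n [b [bn t_b]]] := Rt; have bnz : Bi (d *~ n%:Z) b by [].
exists n, b; split; first exact: Veronese_hom bnz.
have b_t : dehom n b = t by rewrite t_b /dehom -invr_expz -exprnP tofracXn.
apply: tofrac_inj; rewrite (Dcyl_hom bnz) tofrac_dhom // b_t ddt_t // mulr1.
by rewrite tofracXn -PoszD.
Qed.

Lemma Dcyl_spec : (1 <= N)%N ->
  [/\ derivation_on (Veronese Bi d) Dcyl /\ (exists x, Veronese Bi d x /\ Dcyl x != 0),
      homogeneous_on Bi (Veronese Bi d) Dcyl,
      locally_nilpotent_on (Veronese Bi d) Dcyl,
      (exists x, [/\ Veronese Bi d x, Dcyl x = 0 & ~ Bi 0 x]) &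
      (exists n : nat, (1 <= n)%N /\
         (exists a, Veronese Bi d a /\ Dcyl a = f ^+ n) /\ Dcyl (f ^+ n) = 0)].
Proof.
move=> N_gt0; have [n [b [b_Ver Db]]] := Dcyl_preimage_fX.
split.
- split; first by split; [exact: Dcyl_Veronese | exact: DcylD | exact: DcylM].
  by exists b; rewrite Db expf_neq0.
- by exists (d *~ N%:Z) => i x; apply: Dcyl_homogeneous.
- exact: Dcyl_nilpotent.
- exists f; split; first exact: (Veronese_hom (m := 1)).
    by rewrite -[f]expr1 Dcyl_fX.
  move=> f0; have d_neq0 : d != 0 by rewrite -[d]mulr1n d_inf.
  by move: f_neq0; rewrite (grade_diff_eq0 gr fd f0 d_neq0) eqxx.
- exists (n + N)%N; split; first by rewrite addn_gt0 N_gt0 orbT.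
  by split; [exists b | exact: Dcyl_fX].
Qed.

End Derivation.

Lemma cylinder_derivation : fin_gen_alg phi ->
  exists D : B -> B,
    [/\ derivation_on (Veronese Bi d) D /\ (exists x, Veronese Bi d x /\ D x != 0),
        homogeneous_on Bi (Veronese Bi d) D,
        locally_nilpotent_on (Veronese Bi d) D,
        (exists x, [/\ Veronese Bi d x, D x = 0 & ~ Bi 0 x]) &
        (exists n : nat, (1 <= n)%N /\
           (exists a, Veronese Bi d a /\ D a = f ^+ n) /\ D (f ^+ n) = 0)].
Proof.
move=> fg; have [X [X_homog X_gen]] := homogeneous_generators gr fg.
have [N N_pole] := pole_le_uniform X_homog X_gen.
exists (Dcyl N.+1); apply: Dcyl_spec => // m s /N_pole.
exact: pole_le_mono (leqnSn N).
Qed.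

End Cylinder.

Theorem proposition4p6 (G : zmodType) (k : fieldType) (B : idomainType)
  (phi : {rmorphism k -> B}) (Bi : G -> B -> Prop) (f : B) (d : G) :
  [pchar k] =i pred0 ->
  is_grading Bi ->
  (forall c : k, Bi 0 (phi c)) ->
  fin_gen_alg phi ->
  cylindrical Bi f d ->
  exists D : B -> B,
    [/\ derivation_on (Veronese Bi d) D /\
          (exists x, Veronese Bi d x /\ D x != 0),
        homogeneous_on Bi (Veronese Bi d) D,
        locally_nilpotent_on (Veronese Bi d) D,
        (exists x, [/\ Veronese Bi d x, D x = 0 & ~ Bi 0 x]) &
        (exists n : nat, (1 <= n)%N /\
           (exists a, Veronese Bi d a /\ D a = f ^+ n) /\ D (f ^+ n) = 0)].
Proof.
(* The construction works in any characteristic. *)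
move=> _ gr phiB fg [f_neq0 fd d_inf [A [t [[A1 AB] AM [AR Rt] R_polyA tr]]]].
have At : transcendental_over A t by [].
exact: (cylinder_derivation gr phiB f_neq0 fd d_inf At AR Rt R_polyA fg).
Qed.
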